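(* Let $(\mathfrak g,[-,-]_{\mathfrak g})$ be a Lie algebra, $(\rho,V)$ a representation of it, and $T:V\to\mathfrak g$ an anti-$\mathcal O$-operator of $(\mathfrak g,[-,-]_{\mathfrak g})$ associated to $(\rho,V)$. Define $\circ:V\otimes V\to V$ by $u\circ v=-\rho(T(u))v$. Then $(V,\circ)$ satisfies $u\circ(v\circ w)-v\circ(u\circ w)=[v,u]\circ w$ for all $u,v,w\in V$, where $[u,v]=u\circ v-v\circ u$. Moreover, $(V,\circ)$ is an anti-pre-Lie algebra (in particular Lie-admissible) if and only if $T$ is strong. In this case, $T$ is a homomorphism of Lie algebras from $(V,[-,-])$ to $(\mathfrak g,[-,-]_{\mathfrak g})$; furthermore, $T(u)\circ_{\mathfrak g}T(v)=T(u\circ v)$ ($u,v\in V$) defines an anti-pre-Lie algebra structure on $T(V)\subset\mathfrak g$, and $T$ is a homomorphism of anti-pre-Lie algebras from $(V,\circ)$ to $(T(V),\circ_{\mathfrak g})$.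
   Context: All vector spaces are finite-dimensional over a field $\mathbb F$ of characteristic $0$. An anti-pre-Lie algebra is a vector space $A$ with a bilinear operation $\circ$ such that, writing $[x,y]=x\circ y-y\circ x$, for all $x,y,z\in A$: (i) $x\circ(y\circ z)-y\circ(x\circ z)=[y,x]\circ z$, and (ii) $[x,y]\circ z+[y,z]\circ x+[z,x]\circ y=0$. A linear map $T:V\to\mathfrak g$ is an anti-$\mathcal O$-operator associated to a representation $(\rho,V)$ if $[T(u),T(v)]_{\mathfrak g}=T(\rho(T(v))u-\rho(T(u))v)$ for all $u,v\in V$; it is strong if moreover $\rho([T(u),T(v)]_{\mathfrak g})w+\rho([T(v),T(w)]_{\mathfrak g})u+\rho([T(w),T(u)]_{\mathfrak g})v=0$ for all $u,v,w\in V$. *)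

From HB Require Import structures.
From mathcomp Require Import all_boot all_algebra.
Set Implicit Arguments. Unset Strict Implicit. Unset Printing Implicit Defensive.
Import GRing.Theory.
Local Open Scope ring_scope.

Section Defs.
Variable F : fieldType.

Section OnSpace.
Variable A : lmodType F.

Definition bilinear_op (op : A -> A -> A) : Prop :=
  (forall (a : F) x y z, op (a *: x + y) z = a *: op x z + op y z) /\
  (forall (a : F) x y z, op x (a *: y + z) = a *: op x y + op x z).

Definition is_lie_bracket (br : A -> A -> A) : Prop :=
  [/\ bilinear_op br,
      (forall x, br x x = 0) &
      (forall x y z, br x (br y z) + br y (br z x) + br z (br x y) = 0)].

Definition commutator (op : A -> A -> A) (x y : A) : A := op x y - op y x.

Definition anti_pre_Lie_id1 (op : A -> A -> A) : Prop :=
  forall x y z, op x (op y z) - op y (op x z) = op (commutator op y x) z.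

Definition anti_pre_Lie_id2 (op : A -> A -> A) : Prop :=
  forall x y z, op (commutator op x y) z + op (commutator op y z) x
                + op (commutator op z x) y = 0.

Definition anti_pre_Lie (op : A -> A -> A) : Prop :=
  [/\ bilinear_op op, anti_pre_Lie_id1 op & anti_pre_Lie_id2 op].

Definition Lie_admissible (op : A -> A -> A) : Prop :=
  is_lie_bracket (commutator op).

Definition anti_pre_Lie_on (S : A -> Prop) (op : A -> A -> A) : Prop :=
  [/\ (forall (a : F) x y z, S x -> S y -> S z ->
          op (a *: x + y) z = a *: op x z + op y z /\
          op x (a *: y + z) = a *: op x y + op x z),
      (forall x y z, S x -> S y -> S z ->
          op x (op y z) - op y (op x z) = op (commutator op y x) z) &
      (forall x y z, S x -> S y -> S z ->
          op (commutator op x y) z + op (commutator op y z) x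
          + op (commutator op z x) y = 0)].
End OnSpace.

Section Rep.
Variables (g V : lmodType F).

Definition is_linear_map (T : V -> g) : Prop :=
  forall (a : F) u v, T (a *: u + v) = a *: T u + T v.

Definition is_representation (br : g -> g -> g) (rho : g -> V -> V) : Prop :=
  [/\ (forall x (a : F) u v, rho x (a *: u + v) = a *: rho x u + rho x v),
      (forall (a : F) x y v, rho (a *: x + y) v = a *: rho x v + rho y v) &
      (forall x y v, rho (br x y) v = rho x (rho y v) - rho y (rho x v))].

Definition anti_O_operator (br : g -> g -> g) (rho : g -> V -> V) (T : V -> g) : Prop :=
  is_linear_map T /\
  (forall u v, br (T u) (T v) = T (rho (T v) u - rho (T u) v)).

Definition strong_anti_O_operator (br : g -> g -> g) (rho : g -> V -> V) (T : V -> g) : Prop :=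
  anti_O_operator br rho T /\
  (forall u v w, rho (br (T u) (T v)) w + rho (br (T v) (T w)) u
                 + rho (br (T w) (T u)) v = 0).

Definition induced_op (rho : g -> V -> V) (T : V -> g) (u v : V) : V :=
  - rho (T u) v.
End Rep.
End Defs.

From HB Require Import structures.
From mathcomp Require Import all_boot all_algebra.
Set Implicit Arguments. Unset Strict Implicit. Unset Printing Implicit Defensive.
Import GRing.Theory.
Local Open Scope ring_scope.

(* The anti-O-operator identity says exactly
   [T [u, v] = [T u, T v]_g], so [[u, v] o w = - rho ([T u, T v]_g) w]; as rho
   is a representation this yields identity (i), and it turns identity (ii)
   into the strong condition. In any anti-pre-Lie algebra, (i) rewrites the
   double products in the Jacobi sum of the commutator into products
   [[b, a] o c], and the Jacobi sum becomes the difference of (ii) at (y, x, z)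
   and at (x, y, z).
   Finally ker T is stable under every rho (T u), so T (u o v) only depends on
   T u and T v, and o descends to T(V), where it inherits the identities. *)

Lemma sum3_sub_rot (Z : zmodType) (a1 a2 a3 b1 b2 b3 c1 c2 c3 : Z) :
  (a1 - b1 - c1) + (a2 - b2 - c2) + (a3 - b3 - c3)
  = (a1 - b2) + (a2 - b3) + (a3 - b1) - (c1 + c2 + c3).
Proof. by rewrite !opprD !addrA (ACl (1*5*4*8*7*2*3*6*9)). Qed.

Lemma bilinear_opP (F : fieldType) (A : lmodType F) (op : A -> A -> A) :
  bilinear_op op -> bilinear_for *:%R *:%R op.
Proof.
by case=> linl linr; split=> [z a x y | x a y z]; [exact: linl | exact: linr].
Qed.

Section LieAdmissible.
Variables (F : fieldType) (A : lmodType F) (op : A -> A -> A).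
Hypothesis op_bilinear : bilinear_op op.
HB.instance Definition _ :=
  bilinear_isBilinear.Build _ _ _ _ _ _ op (bilinear_opP op_bilinear).

Local Notation "[ x , y ]" := (commutator op x y).

Lemma commutator_bilinear : bilinear_op (commutator op).
Proof.
split=> a x y z;
  by rewrite /commutator linearPl linearPr scalerBr addrACA opprD.
Qed.

Lemma commutator_jacobi :
  anti_pre_Lie_id1 op -> anti_pre_Lie_id2 op ->
  forall x y z, [x, [y, z]] + [y, [z, x]] + [z, [x, y]] = 0.
Proof.
move=> id1 id2 x y z.
rewrite /commutator !linearBr -/[y, z] -/[z, x] -/[x, y] sum3_sub_rot.
by rewrite !id1 [X in X - _]addrAC id2 [X in _ - X]addrC addrA id2 subrr.
Qed.

End LieAdmissible.

Lemma anti_pre_Lie_Lie_admissible (F : fieldType) (A : lmodType F)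
    (op : A -> A -> A) :
  anti_pre_Lie op -> Lie_admissible op.
Proof.
case=> op_bilinear id1 id2; split; first exact: commutator_bilinear.
  by move=> x; rewrite /commutator subrr.
exact: commutator_jacobi.
Qed.

Section ImageTransfer.
Variables (F : fieldType) (A B : lmodType F) (f : A -> B).
Variables (op : A -> A -> A) (opB : B -> B -> B).
Hypothesis f_linear : is_linear_map f.
HB.instance Definition _ := GRing.isLinear.Build F A B *:%R f f_linear.
Hypothesis f_morph : forall u v, opB (f u) (f v) = f (op u v).

Lemma commutator_morph u v : commutator opB (f u) (f v) = f (commutator op u v).
Proof. by rewrite /commutator !f_morph linearB. Qed.

Lemma anti_pre_Lie_on_image :
  anti_pre_Lie op -> anti_pre_Lie_on (fun x => exists u, x = f u) opB.
Proof.
case=> [[linl linr] id1 id2]; split.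
- move=> a _ _ _ [u ->] [v ->] [w ->].
  by rewrite -!f_linear !f_morph linl linr !f_linear.
- move=> _ _ _ [u ->] [v ->] [w ->].
  by rewrite commutator_morph !f_morph -linearB id1.
- move=> _ _ _ [u ->] [v ->] [w ->].
  by rewrite !commutator_morph !f_morph -!linearD id2 linear0.
Qed.

End ImageTransfer.

Section InducedProduct.
Variables (F : fieldType) (g V : lmodType F).
Variables (br : g -> g -> g) (rho : g -> V -> V) (T : V -> g).
Hypotheses (br_bilinear : bilinear_op br) (rho_rep : is_representation br rho).
Hypothesis T_anti_O : anti_O_operator br rho T.

HB.instance Definition _ :=
  bilinear_isBilinear.Build _ _ _ _ _ _ br (bilinear_opP br_bilinear).

Let rho_bilinear : bilinear_for *:%R *:%R rho.
Proof.
case: rho_rep => linr linl _.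
by split=> [v a x y | x a u v]; [exact: linl | exact: linr].
Qed.
HB.instance Definition _ :=
  bilinear_isBilinear.Build _ _ _ _ _ _ rho rho_bilinear.

Let rho_bracket x y v : rho (br x y) v = rho x (rho y v) - rho y (rho x v).
Proof. by case: rho_rep. Qed.

Let T_linear : is_linear_map T. Proof. by case: T_anti_O. Qed.
HB.instance Definition _ := GRing.isLinear.Build F V g *:%R T T_linear.

Let T_bracket u v : br (T u) (T v) = T (rho (T v) u - rho (T u) v).
Proof. by case: T_anti_O. Qed.

Local Notation op := (induced_op rho T).

Lemma induced_commutatorE u v : commutator op u v = rho (T v) u - rho (T u) v.
Proof. by rewrite /commutator /induced_op opprK addrC. Qed.

Lemma anti_O_commutator u v : T (commutator op u v) = br (T u) (T v).
Proof. by rewrite induced_commutatorE T_bracket. Qed.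

Lemma anti_O_bracket_skew u v : br (T v) (T u) = - br (T u) (T v).
Proof. by rewrite !T_bracket -[RHS]linearN opprB. Qed.

Lemma induced_op_commutator u v w :
  op (commutator op u v) w = - rho (br (T u) (T v)) w.
Proof. by rewrite /induced_op anti_O_commutator. Qed.

Lemma induced_op_bilinear : bilinear_op op.
Proof.
split=> a x y z; rewrite /induced_op.
  by rewrite linearP linearPl opprD scalerN.
by rewrite linearPr opprD scalerN.
Qed.

Lemma induced_op_id1 : anti_pre_Lie_id1 op.
Proof.
move=> x y z.
rewrite induced_op_commutator anti_O_bracket_skew linearNl /= [RHS]opprK.
by rewrite rho_bracket /induced_op !linearNr !opprK.
Qed.

Lemma induced_op_id2P :
  anti_pre_Lie_id2 op <->
  (forall u v w, rho (br (T u) (T v)) w + rho (br (T v) (T w)) u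
                 + rho (br (T w) (T u)) v = 0).
Proof.
have sumE u v w : op (commutator op u v) w + op (commutator op v w) u
                  + op (commutator op w u) v
                = - (rho (br (T u) (T v)) w + rho (br (T v) (T w)) u
                     + rho (br (T w) (T u)) v).
  by rewrite !induced_op_commutator !opprD.
split=> id2 u v w; last by rewrite sumE id2 oppr0.
by apply: oppr_inj; rewrite -sumE id2 oppr0.
Qed.

Lemma induced_anti_pre_LieP :
  anti_pre_Lie op <-> strong_anti_O_operator br rho T.
Proof.
split=> [[_ _ /induced_op_id2P strong] | [_ /induced_op_id2P id2]] //.
split; [exact: induced_op_bilinear | exact: induced_op_id1 | exact: id2].
Qed.

Lemma anti_O_kernel_stable u k : T k = 0 -> T (rho (T u) k) = 0.
Proof.
move=> Tk0; have := T_bracket u k.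
rewrite Tk0 linear0r linear0l sub0r linearN => /esym/eqP.
by rewrite oppr_eq0 => /eqP.
Qed.

Lemma induced_op_congr u v v' : T v = T v' -> T (op u v) = T (op u v').
Proof.
move=> /eqP; rewrite -subr_eq0 -linearB => /eqP/(anti_O_kernel_stable u).
rewrite linearBr linearB => /eqP; rewrite subr_eq0 => /eqP Te.
by rewrite /induced_op !linearN Te.
Qed.

End InducedProduct.

(* [(linfun T)^-1] is a right inverse of T on its image; off T(V) the product
   is junk. *)
Definition induced_image_op (F : fieldType) (g V : vectType F)
    (rho : g -> V -> V) (T : V -> g) (x y : g) : g :=
  T (- rho x ((linfun T)^-1 y))%VF.

Section ImageProduct.
Variables (F : fieldType) (g V : vectType F).
Variables (br : g -> g -> g) (rho : g -> V -> V) (T : V -> g).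
Hypotheses (br_bilinear : bilinear_op br) (rho_rep : is_representation br rho).
Hypothesis T_anti_O : anti_O_operator br rho T.

Let T_linear : is_linear_map T. Proof. by case: T_anti_O. Qed.
HB.instance Definition _ := GRing.isLinear.Build F V g *:%R T T_linear.

Lemma induced_image_opE u v :
  induced_image_op rho T (T u) (T v) = T (induced_op rho T u v).
Proof.
apply: (induced_op_congr br_bilinear rho_rep T_anti_O).
rewrite -[LHS](lfunE T) limg_lfunVK // -(lfunE T v).
exact: memv_img (memvf v).
Qed.

End ImageProduct.

Theorem proposition2p14 (F : fieldType) (g V : vectType F)
    (br : g -> g -> g) (rho : g -> V -> V) (T : V -> g) :
  [pchar F] =i pred0 ->
  is_lie_bracket br ->
  is_representation br rho ->
  anti_O_operator br rho T ->
  let op := induced_op rho T in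
  [/\ anti_pre_Lie_id1 op,
      (anti_pre_Lie op <-> strong_anti_O_operator br rho T) &
      (strong_anti_O_operator br rho T ->
        [/\ Lie_admissible op,
            (forall u v, T (commutator op u v) = br (T u) (T v)) &
            exists opg : g -> g -> g,
              (forall u v, opg (T u) (T v) = T (op u v)) /\
              anti_pre_Lie_on (fun x => exists u, x = T u) opg])].
Proof.
move=> _ [br_bilinear _ _] rho_rep T_anti_O /=.
have op_APL := induced_anti_pre_LieP rho_rep T_anti_O.
split=> [|//|/op_APL APL]; first exact: induced_op_id1 rho_rep T_anti_O.
split; first exact: anti_pre_Lie_Lie_admissible.
  exact: anti_O_commutator.
have opgE := induced_image_opE br_bilinear rho_rep T_anti_O.
exists (induced_image_op rho T); split=> //.
exact: anti_pre_Lie_on_image T_anti_O.1 opgE APL.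
Qed.
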